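(* Let $L\in(0,\infty)$ and for $k\in\mathbb{N}$ put $n_k:=\lfloor (k/L)^2\rfloor$. Then for every $x\in F(1/2,1)$ there is $k_0=k_0(x)$ such that for every $k\ge k_0$ there exists an integer $j_k$ with $n_{k-1}<j_k\le n_k$ and $T_{n_k}(x)=a_{j_k}(x)$.
   Context: Every $x\in(0,1)\setminus\mathbb{Q}$ has a unique infinite continued fraction expansion $x=[a_1(x),a_2(x),\dots]$ with partial quotients $a_i(x)\in\mathbb{N}=\{1,2,\dots\}$. For $n\in\mathbb{N}$ let $T_n(x):=\max\{a_k(x):1\le k\le n\}$. Define $$F(1/2,1):=\Big\{x\in(0,1)\setminus\mathbb{Q}:\ \lim_{n\to\infty}\frac{T_n(x)}{e^{\sqrt{n}}}=1\Big\}.$$ *)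

From Stdlib Require Import Reals Lra Lia ZArith Arith.
Open Scope R_scope.

(* floor of a real, as an integer: Int_part r = up r - 1 = floor r *)
Definition floorZ (r : R) : Z := Int_part r.

Definition gauss (x : R) : R := / x - IZR (floorZ (/ x)).

(* Continued fraction partial quotients, 1-indexed:
   a_1(x) = floor(1/x), a_{n+1}(x) = a_1(G^n x).  (cf_digit 0 x is a dummy.) *)
Definition cf_digit (n : nat) (x : R) : nat :=
  match n with
  | O => O
  | S m => Z.to_nat (floorZ (/ (Nat.iter m gauss x)))
  end.

Fixpoint Tmax (n : nat) (x : R) : nat :=
  match n with
  | O => O
  | S m => Nat.max (Tmax m x) (cf_digit (S m) x)
  end.

Definition irrational (x : R) : Prop :=
  forall p q : Z, q <> 0%Z -> x <> IZR p / IZR q.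

Definition F_half_one (x : R) : Prop :=
  0 < x < 1 /\ irrational x /\
  Un_cv (fun n => INR (Tmax n x) / exp (sqrt (INR n))) 1.

Definition nk (L : R) (k : nat) : nat := Z.to_nat (floorZ ((INR k / L) ^ 2)).

(* Since T_n(x) ~ e^(sqrt n), the running maximum grows by a factor close to
   e^(sqrt n_k - sqrt n_(k-1)) between n_(k-1) and n_k.  That exponent is
   eventually at least 1/(2L), so for large k the ratio exceeds 1 and
   T_(n_(k-1)) < T_(n_k): the maximum over [1, n_k] is therefore attained at a
   new index in (n_(k-1), n_k]. *)

From Stdlib Require Import Reals ZArith Lra Lia.
Open Scope R_scope.

Lemma Tmax_mono x p m : (p <= m)%nat -> (Tmax p x <= Tmax m x)%nat.
Proof. induction 1; cbn [Tmax]; lia. Qed.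

Lemma Tmax_lt_attained x p m :
  (Tmax p x < Tmax m x)%nat ->
  exists j, (p < j <= m)%nat /\ Tmax m x = cf_digit j x.
Proof.
  induction m as [|m IH]; intros Hlt; [cbn [Tmax] in Hlt; lia|].
  assert (Hpm : (p < S m)%nat).
  { destruct (le_lt_dec (S m) p) as [Hle|Hlt']; [|exact Hlt'].
    pose proof (Tmax_mono x _ _ Hle); lia. }
  cbn [Tmax] in Hlt |- *.
  destruct (Nat.le_gt_cases (cf_digit (S m) x) (Tmax m x)) as [Hold|Hnew].
  - rewrite Nat.max_l in Hlt |- * by exact Hold.
    destruct (IH Hlt) as (j & Hj & E).
    exists j; split; [lia|exact E].
  - exists (S m); rewrite Nat.max_r by lia; split; [lia|reflexivity].
Qed.

Lemma ratio_cv_one_separates (t s : nat -> R) (a : R) :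
  1 < a -> (forall n, 0 < s n) -> Un_cv (fun n => t n / s n) 1 ->
  exists N, forall p m, (N <= p)%nat -> (N <= m)%nat ->
    a * s p <= s m -> t p < t m.
Proof.
  intros Ha Hs Hcv.
  set (eps := (a - 1) / (2 * (a + 1))).
  assert (Heps : 0 < eps) by (unfold eps; apply Rdiv_lt_0_compat; lra).
  assert (Heps_def : eps * (2 * (a + 1)) = a - 1) by (unfold eps; field; lra).
  destruct (Hcv eps Heps) as [N HN].
  assert (Hsandwich : forall n, (N <= n)%nat ->
            (1 - eps) * s n < t n < (1 + eps) * s n).
  { intros n Hn.
    specialize (HN n Hn); unfold R_dist in HN; apply Rabs_def2 in HN.
    pose proof (Hs n) as Hsn.
    replace (t n) with (t n / s n * s n) by (field; lra).
    split; nra. }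
  exists N; intros p m Hp Hm Hpm.
  destruct (Hsandwich p Hp) as [_ Hp_up].
  destruct (Hsandwich m Hm) as [Hm_lo _].
  pose proof (Hs p).
  (* (1 - eps) a - (1 + eps) = (a - 1) / 2 > 0 by the choice of eps *)
  assert ((1 + eps) * s p < (1 - eps) * (a * s p)) by nra.
  assert ((1 - eps) * (a * s p) <= (1 - eps) * s m) by nra.
  lra.
Qed.

Lemma nk_bounds L k : (INR k / L) ^ 2 - 1 < INR (nk L k) <= (INR k / L) ^ 2.
Proof.
  unfold nk, floorZ.
  set (r := (INR k / L) ^ 2).
  destruct (base_Int_part r) as [Hlo Hhi].
  assert (Hr : 0 <= r) by apply pow2_ge_0.
  assert (Hz : (0 <= Int_part r)%Z).
  { assert (IZR (-1) < IZR (Int_part r)) by (simpl; lra).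
    apply lt_IZR in H; lia. }
  rewrite INR_IZR_INZ, Z2Nat.id by exact Hz. lra.
Qed.

Lemma nk_ge L N k : 0 < L -> L * (INR N + 1) <= INR k -> (N <= nk L k)%nat.
Proof.
  intros HL Hk.
  set (A := INR k / L).
  assert (HA : INR N + 1 <= A).
  { unfold A; apply Rmult_le_reg_r with L; [lra|].
    unfold Rdiv; rewrite Rmult_assoc, Rinv_l by lra; lra. }
  pose proof (pos_INR N).
  destruct (nk_bounds L k) as [Hlo _]; fold A in Hlo.
  apply INR_le; nra.
Qed.

Lemma sqrt_nk_le L k : 0 < L -> sqrt (INR (nk L k)) <= INR k / L.
Proof.
  intros HL.
  destruct (nk_bounds L k) as [_ Hhi].
  assert (0 <= INR k / L) by 
    (apply Rmult_le_pos; [apply pos_INR|left; apply Rinv_0_lt_compat; lra]).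
  rewrite <- (sqrt_pow2 (INR k / L)) by assumption.
  now apply sqrt_le_1_alt.
Qed.

Lemma sqrt_nk_ge L k :
  0 < L -> L <= INR k -> INR k / L - L / INR k <= sqrt (INR (nk L k)).
Proof.
  intros HL Hk.
  set (A := INR k / L).
  assert (HA : 1 <= A).
  { unfold A; apply Rmult_le_reg_r with L; [lra|].
    unfold Rdiv; rewrite Rmult_assoc, Rinv_l by lra; lra. }
  assert (Hinv : L / INR k = / A) by (unfold A; field; lra).
  rewrite Hinv.
  assert (HinvA : 0 < / A <= 1).
  { split; [apply Rinv_0_lt_compat; lra|].
    rewrite <- Rinv_1; apply Rinv_le_contravar; lra. }
  assert (Hsq : (A - / A) ^ 2 = A ^ 2 - 2 + (/ A) ^ 2) by (field; lra).
  destruct (nk_bounds L k) as [Hlo _]; fold A in Hlo.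
  rewrite <- (sqrt_pow2 (A - / A)) by nra.
  apply sqrt_le_1_alt; nra.
Qed.

Lemma sqrt_nk_gap L k :
  0 < L -> L <= INR k -> 2 * L ^ 2 <= INR k ->
  sqrt (INR (nk L (k - 1))) + / (2 * L) <= sqrt (INR (nk L k)).
Proof.
  intros HL Hk Hk2.
  assert (Hk1 : INR (k - 1) = INR k - 1).
  { assert (H1 : (1 <= k)%nat) by (destruct k; [simpl in Hk; lra|lia]).
    rewrite minus_INR by exact H1; reflexivity. }
  pose proof (sqrt_nk_le L (k - 1) HL) as Hprev.
  pose proof (sqrt_nk_ge L k HL Hk) as Hcur.
  assert (Hsmall : L / INR k <= / (2 * L)).
  { replace (L / INR k) with (/ (2 * L) * (2 * L ^ 2 / INR k)) by (field; lra).
    rewrite <- (Rmult_1_r (/ (2 * L))) at 2.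
    apply Rmult_le_compat_l; [left; apply Rinv_0_lt_compat; lra|].
    apply Rmult_le_reg_r with (INR k); [lra|].
    unfold Rdiv; rewrite Rmult_assoc, Rinv_l by lra; lra. }
  assert (Hstep : INR k / L - INR (k - 1) / L = 2 * / (2 * L))
    by (rewrite Hk1; field; lra).
  lra.
Qed.

Theorem lemma1 (L : R) (hL : 0 < L) (x : R) (hx : F_half_one x) :
  exists k0 : nat, (1 <= k0)%nat /\
    forall k : nat, (k0 <= k)%nat ->
      exists j : nat, (nk L (k - 1) < j <= nk L k)%nat /\
        Tmax (nk L k) x = cf_digit j x.
Proof.
  destruct hx as (_ & _ & Hcv).
  set (a := exp (/ (2 * L))).
  assert (Ha : 1 < a).
  { rewrite <- exp_0; apply exp_increasing, Rinv_0_lt_compat; lra. }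
  destruct (ratio_cv_one_separates (fun n => INR (Tmax n x))
              (fun n => exp (sqrt (INR n))) a Ha (fun n => exp_pos _) Hcv)
    as [N HN].
  destruct (INR_unbounded (L * (INR N + 1) + L + 2 * L ^ 2)) as [K HK].
  exists (S K); split; [lia|]; intros k Hk.
  assert (HKk1 : INR K <= INR (k - 1)) by (apply le_INR; lia).
  assert (Hk1k : INR (k - 1) <= INR k) by (apply le_INR; lia).
  assert (0 <= L * (INR N + 1)) by (pose proof (pos_INR N); nra).
  pose proof (pow2_ge_0 L).
  apply Tmax_lt_attained, INR_lt, HN.
  - apply nk_ge; lra.
  - apply nk_ge; lra.
  - unfold a; rewrite <- exp_plus, Rplus_comm.
    destruct (Rle_lt_or_eq_dec _ _ (sqrt_nk_gap L k hL ltac:(lra) ltac:(lra)))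
      as [Hlt|Heq].
    + left; now apply exp_increasing.
    + right; now rewrite Heq.
Qed.
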